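(* Let $K$ be a valued field and $d\ge 1$. Then the VC-dimension of $\operatorname{Conv}_{K^d}$ is exactly $d+1$: some subset of $K^d$ of size $d+1$ is shattered by $\operatorname{Conv}_{K^d}$, and no subset of size $d+2$ is.
   Context: $K$ is a field with valuation $\nu$ and valuation ring $\mathcal{O}=\{x:\nu(x)\ge0\}$. A set $X\subseteq K^d$ is convex if it is closed under combinations $\sum_{i=1}^n\alpha_ix_i$ with $x_i\in X$, $\alpha_i\in\mathcal{O}$, $\sum\alpha_i=1$; $\operatorname{Conv}_{K^d}$ is the family of all convex subsets of $K^d$. A family $\mathcal{F}\subseteq\mathcal{P}(X)$ shatters $Y\subseteq X$ if $\{S\cap Y:S\in\mathcal{F}\}=\mathcal{P}(Y)$; the VC-dimension of $\mathcal{F}$ is the largest $k$ such that $\mathcal{F}$ shatters some $k$-element set (or $\infty$). *)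

From mathcomp Require Import all_boot all_order all_algebra.
Set Implicit Arguments. Unset Strict Implicit. Unset Printing Implicit Defensive.
Import GRing.Theory.
Local Open Scope ring_scope.

(* A (Krull) valuation nu : K -> Gamma u {oo}, Gamma a totally ordered abelian
   group (zmodType G with a total order [le] compatible with addition).
   The value oo is encoded as [None]. *)

Definition ordered_group (G : zmodType) (le : rel G) : Prop :=
  [/\ reflexive le, antisymmetric le, transitive le, total le &
      forall a b c : G, le a b -> le (a + c) (b + c)].

Definition vle (G : zmodType) (le : rel G) (x y : option G) : bool :=
  match x, y with
  | _, None => true
  | None, Some _ => false
  | Some a, Some b => le a b
  end.

Definition vadd (G : zmodType) (x y : option G) : option G :=
  match x, y with
  | Some a, Some b => Some (a + b)
  | _, _ => None
  end.

Definition is_valuation (K : fieldType) (G : zmodType) (le : rel G)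
    (nu : K -> option G) : Prop :=
  [/\ forall x, nu x = None <-> x = 0,
      forall x y, nu (x * y) = vadd (nu x) (nu y) &
      forall x y, vle le (nu x) (nu (x + y)) || vle le (nu y) (nu (x + y))].
  (* the last axiom is nu(x+y) >= min(nu x, nu y) *)

Definition val_ring (K : fieldType) (G : zmodType) (le : rel G)
    (nu : K -> option G) (a : K) : Prop := vle le (Some 0) (nu a).

Definition convex (K : fieldType) (G : zmodType) (le : rel G)
    (nu : K -> option G) (d : nat) (X : 'rV[K]_d -> Prop) : Prop :=
  forall (n : nat) (x : 'I_n -> 'rV[K]_d) (alpha : 'I_n -> K),
    (forall i, X (x i)) -> (forall i, val_ring le nu (alpha i)) ->
    \sum_(i < n) alpha i = 1 ->
    X (\sum_(i < n) alpha i *: x i).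

Definition Conv (K : fieldType) (G : zmodType) (le : rel G)
    (nu : K -> option G) (d : nat) : ('rV[K]_d -> Prop) -> Prop :=
  fun X => @convex K G le nu d X.
Arguments Conv {K G} le nu d _.

Definition shatters (T : eqType) (F : (T -> Prop) -> Prop) (Y : seq T) : Prop :=
  forall Z : T -> Prop, (forall y, Z y -> y \in Y) ->
    exists S, F S /\ forall y, y \in Y -> (S y <-> Z y).

Definition VC_dim_eq (T : eqType) (F : (T -> Prop) -> Prop) (k : nat) : Prop :=
  (exists Y : seq T, uniq Y /\ size Y = k /\ shatters F Y) /\
  (forall Y : seq T, uniq Y -> shatters F Y -> (size Y <= k)%N).

(* Lower bound: the simplex {0, e_1, ..., e_d} is shattered.  For Z a subset of
   it, the set cut out by the affine equations "x_j = 0" (one for each e_j not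
   in Z) and "x_1 + ... + x_d = 1" (if 0 is not in Z) is convex, being an
   intersection of affine hyperplanes, and it meets the simplex exactly in Z.

   Upper bound: any d+2 points x_0, ..., x_{d+1} of K^d admit a nontrivial
   affine dependence sum_i v_i x_i = 0 with sum_i v_i = 0.  Choosing k with
   nu(v_k) minimal, every ratio -v_i/v_k lies in the valuation ring, so
   x_k = sum_{i <> k} (-v_i/v_k) x_i is an O-convex combination of the other
   points; hence no convex set cuts out the d+1 points other than x_k. *)

From mathcomp Require Import all_boot all_order all_algebra.
From Stdlib Require Import Classical.
Set Implicit Arguments. Unset Strict Implicit. Unset Printing Implicit Defensive.
Import GRing.Theory.
Local Open Scope ring_scope.

Section ValueOrder.
Variables (G : zmodType) (le : rel G).
Hypothesis hG : ordered_group le.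

Lemma vle_refl : reflexive (vle le).
Proof. by case: hG => refl _ _ _ _ [a|] /=. Qed.

Lemma vle_trans : transitive (vle le).
Proof. by case: hG => _ _ trans _ _ [b|] [a|] [c|] //=; apply: trans. Qed.

Lemma vle_total : total (vle le).
Proof. by case: hG => _ _ _ tot _ [a|] [b|] /=. Qed.

End ValueOrder.

Section Valuation.
Variables (K : fieldType) (G : zmodType) (le : rel G).
Hypothesis hG : ordered_group le.
Variable nu : K -> option G.
Hypothesis hnu : is_valuation le nu.

Lemma nu0 : nu 0 = None.
Proof. by case: hnu => h0 _ _; apply/h0. Qed.

Lemma nu_finite x : x != 0 -> exists g, nu x = Some g.
Proof.
case: hnu => h0 _ _ nx; case E: (nu x) => [g|]; first by exists g.
by move/h0: E => /eqP; rewrite (negbTE nx).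
Qed.

(* nu(1) = 0, since nu(1) = nu(1) + nu(1). *)
Lemma nu1 : nu 1 = Some 0.
Proof.
case: hnu => _ hm _; have [g Hg] := nu_finite (oner_neq0 K).
have := hm 1 1; rewrite mulr1 Hg /= => -[gg].
by have := congr1 (fun h => h - g) gg; rewrite addrK subrr => ->.
Qed.

(* nu(-1) = 0: its double is nu 1 = 0, and an ordered group is torsion-free. *)
Lemma nuN1 : nu (-1) = Some 0.
Proof.
case: hnu => _ hm _; case: hG => _ anti _ tot comp.
have n1 : (-1 : K) != 0 by rewrite oppr_eq0 oner_eq0.
have [h Hh] := nu_finite n1.
have := hm (-1) (-1); rewrite mulrNN mulr1 nu1 Hh /= => -[hh].
suff -> : h = 0 by [].
apply: anti; case/orP: (tot h 0) => H; rewrite H ?andbT /=.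
- by have := comp h 0 h H; rewrite add0r -hh.
- by have := comp 0 h h H; rewrite add0r -hh.
Qed.

Lemma nuN x : nu (- x) = nu x.
Proof.
case: hnu => _ hm _; rewrite -mulN1r hm nuN1.
by case: (nu x) => [a|] //=; rewrite add0r.
Qed.

Lemma val_ring_ratio a b : a != 0 -> vle le (nu a) (nu b) -> val_ring le nu (b / a).
Proof.
case: hnu => _ hm _; case: hG => _ _ _ _ comp => a0.
have [g ga] := nu_finite a0.
have : vadd (nu a) (nu a^-1) = Some 0 by rewrite -hm divff // nu1.
rewrite /val_ring hm ga; case: (nu a^-1) => [m|] //= [gm].
by case: (nu b) => [c|] //= gc; have := comp g c m gc; rewrite gm.
Qed.

End Valuation.

Section Convexity.
Variables (K : fieldType) (G : zmodType) (le : rel G) (nu : K -> option G).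
Variable d : nat.
Local Notation convex := (convex le nu (d := d)).

(* An affine hyperplane {x | <x, u> = c} is convex; in fact it is closed
   under all affine combinations, whatever the coefficients. *)
Lemma convex_level (u : 'cV[K]_d) (c : K) : convex (fun x => (x *m u) 0 0 = c).
Proof.
move=> n x alpha hx _ sum1; rewrite mulmx_suml summxE.
under eq_bigr => i _ do rewrite -scalemxAl mxE hx.
by rewrite -mulr_suml sum1 mul1r.
Qed.

Lemma convex_setI (X Y : 'rV[K]_d -> Prop) :
  convex X -> convex Y -> convex (fun x => X x /\ Y x).
Proof.
move=> cX cY n x alpha hx hO sum1.
by split; [apply: cX | apply: cY] => // i; case: (hx i).
Qed.

Lemma convex_bigcap (I : Type) (X : I -> 'rV[K]_d -> Prop) :
  (forall j, convex (X j)) -> convex (fun x => forall j, X j x).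
Proof. by move=> cX n x alpha hx hO sum1 j; apply: cX => // i; apply: hx. Qed.

Lemma convex_guard (Q : Prop) (X : 'rV[K]_d -> Prop) :
  convex X -> convex (fun x => Q -> X x).
Proof. by move=> cX n x alpha hx hO sum1 q; apply: cX => // i; apply: hx. Qed.

End Convexity.

(* Any n >= d+2 points of K^d are affinely dependent: the n x (d+1) matrix of
   their affine coordinates (x_i, 1) has a nonzero left kernel. *)
Lemma affine_dependence (K : fieldType) (d n : nat) (x : 'I_n -> 'rV[K]_d) :
  (d.+2 <= n)%N ->
  exists v : 'I_n -> K, (exists i, v i != 0) /\
    \sum_i v i *: x i = 0 /\ \sum_i v i = 0.
Proof.
move=> hn; pose M := row_mx (\matrix_i x i) (const_mx 1 : 'M[K]_(n, 1)).
have : kermx M != 0.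
  rewrite kermx_eq0 /row_free; apply/negP => /eqP rkM.
  by have := rank_leq_col M; rewrite rkM addn1 leqNgt hn.
case/matrix0Pn => i [j kij].
pose v := row i (kermx M).
have : v *m M = 0 by rewrite /v -row_mul mulmx_ker row0.
rewrite mul_mx_row -row_mx0 => /eq_row_mx [vx v1].
exists (fun l => v 0 l); split; [|split].
- by exists j; rewrite mxE.
- rewrite -[RHS]vx mulmx_sum_row; apply: eq_bigr => l _; congr (_ *: _).
  by apply/rowP => k; rewrite !mxE.
- have := congr1 (fun A : 'M_1 => A 0 0) v1; rewrite [LHS]mxE [RHS]mxE => s0.
  by apply: etrans s0; apply: eq_bigr => l _; rewrite [const_mx _ _ _]mxE mulr1.
Qed.

Section UpperBound.
Variables (K : fieldType) (G : zmodType) (le : rel G).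
Hypothesis hG : ordered_group le.
Variable nu : K -> option G.
Hypothesis hnu : is_valuation le nu.

(* Core of the upper bound: given an affine dependence v of the points x_i and
   an index k of minimal value nu(v_k), the point x_k belongs to every convex
   set containing the other points (at least one other point is needed to
   fill the slot of index k in the combination). *)
Lemma dependent_point_in_convex d n (x : 'I_n -> 'rV[K]_d) (v : 'I_n -> K)
    (k k' : 'I_n) (X : 'rV[K]_d -> Prop) :
  \sum_i v i *: x i = 0 -> \sum_i v i = 0 -> v k != 0 ->
  (forall i, vle le (nu (v k)) (nu (v i))) -> k' != k ->
  convex le nu X -> (forall i, i != k -> X (x i)) -> X (x k).
Proof.
move=> vx0 v0 vk0 kmin k'k cX Xx.
pose c i := if i == k then 0 else - (v i / v k).
pose y i := if i == k then x k' else x i.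
have Xy i : X (y i) by rewrite /y; case: eqP => [_|/eqP]; apply: Xx.
have cO i : val_ring le nu (c i).
  rewrite /c /val_ring; case: eqP => _; first by rewrite (nu0 hnu).
  by rewrite (nuN hG hnu); apply: (val_ring_ratio hG hnu).
have sum_other : \sum_(i | i != k) v i = - v k.
  by move: v0; rewrite (bigD1 k) //= => /eqP; rewrite addrC addr_eq0 => /eqP.
have comb_other : \sum_(i | i != k) v i *: x i = - (v k *: x k).
  by move: vx0; rewrite (bigD1 k) //= => /eqP; rewrite addrC addr_eq0 => /eqP.
have c1 : \sum_i c i = 1.
  rewrite (bigD1 k) //= /c eqxx add0r.
  rewrite (eq_bigr (fun i => - (v i / v k))); last by move=> i /negbTE ->.
  by rewrite sumrN -mulr_suml sum_other mulNr opprK divff.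
have -> : x k = \sum_i c i *: y i.
  rewrite (bigD1 k) //= /c /y eqxx scale0r add0r.
  rewrite (eq_bigr (fun i => (- (v k)^-1) *: (v i *: x i))); last first.
    by move=> i /negbTE ->; rewrite scalerA mulNr [_^-1 * _]mulrC.
  by rewrite -scaler_sumr comb_other scaleNr scalerN opprK scalerA mulVf ?scale1r.
exact: cX.
Qed.

Lemma convex_no_shatter d (Y : seq 'rV[K]_d) :
  uniq Y -> (d.+2 <= size Y)%N -> ~ shatters (Conv le nu d) Y.
Proof.
move=> uY hs shY.
pose x (i : 'I_d.+2) := nth 0 Y i.
have xY i : x i \in Y by rewrite mem_nth // (leq_trans (ltn_ord i) hs).
have x_inj i j : (x i == x j) = (i == j).
  by rewrite nth_uniq // (leq_trans (ltn_ord _) hs).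
have [v [[i0 vi0] [vx0 v0]]] := affine_dependence x (leqnn _).
have [k _ kmin] := @extremumP _ _ (vle le) ord0 xpredT (fun i => nu (v i))
  (vle_refl hG) (vle_trans hG) (vle_total hG) isT.
have vk0 : v k != 0.
  apply: contraTneq (kmin i0 isT) => ->; rewrite (nu0 hnu).
  by have [g ->] := nu_finite hnu vi0.
pose k' : 'I_d.+2 := if k == ord0 then ord_max else ord0.
have k'k : k' != k by rewrite /k'; case: (k =P ord0) => [->|/eqP]; rewrite // eq_sym.
have [S [cS SY]] := shY (fun z => z \in Y /\ z != x k) (fun z => @proj1 _ _).
have /(SY _ (xY k)) [_] : S (x k).
  apply: (dependent_point_in_convex vx0 v0 vk0 (fun i => kmin i isT) k'k cS).
  by move=> i ik; apply/(SY _ (xY i)); rewrite x_inj.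
by rewrite eqxx.
Qed.

End UpperBound.

Section LowerBound.
Variables (K : fieldType) (G : zmodType) (le : rel G) (nu : K -> option G).
Variable d : nat.

Local Notation e j := (delta_mx 0 j : 'rV[K]_d).
Local Notation coord j := (delta_mx j 0 : 'cV[K]_d).
Local Notation ones := (const_mx 1 : 'cV[K]_d).

Definition simplex : seq 'rV[K]_d := 0 :: map (fun j => e j) (enum 'I_d).

(* Coordinates and coordinate sum, written as the linear forms <x, u> used by
   convex_level. *)
Lemma coord_delta (x : 'rV[K]_d) j : (x *m coord j) 0 0 = x 0 j.
Proof. by rewrite -colE mxE. Qed.

Lemma coord_sum (x : 'rV[K]_d) : (x *m ones) 0 0 = \sum_j x 0 j.
Proof. by rewrite mxE; apply: eq_bigr => j _; rewrite mxE mulr1. Qed.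

Lemma e_neq0 j : e j != 0.
Proof. by apply/negP => /eqP/rowP/(_ j); rewrite !mxE !eqxx => /eqP; rewrite oner_eq0. Qed.

Lemma e_inj : injective (fun j => e j).
Proof.
move=> i j /rowP/(_ j); rewrite !mxE !eqxx /=.
by case: eqP => // _ /eqP; rewrite eq_sym oner_eq0.
Qed.

Lemma simplex_shattered :
  shatters (Conv le nu d) simplex.
Proof.
move=> Z _.
exists (fun x => (forall j, ~ Z (e j) -> (x *m coord j) 0 0 = 0) /\
                 (~ Z 0 -> (x *m ones) 0 0 = 1)); split.
  apply: convex_setI.
  - by apply: convex_bigcap => j; apply: convex_guard; apply: convex_level.
  - by apply: convex_guard; apply: convex_level.
move=> y; rewrite /simplex inE => /orP[/eqP -> | /mapP[j _ ->]]; split.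
- case=> _ sum1; apply: NNPP => nZ0; move: (sum1 nZ0).
  by rewrite coord_sum big1 => [/eqP|i _]; rewrite ?mxE // eq_sym oner_eq0.
- by move=> Z0; split=> [j _|//]; rewrite coord_delta mxE.
- case=> coord0 _; apply: NNPP => nZj; move: (coord0 j nZj).
  by rewrite coord_delta mxE !eqxx => /eqP; rewrite oner_eq0.
- move=> Zj; split=> [i nZi | _]; rewrite ?coord_delta ?coord_sum.
    by rewrite mxE eqxx /=; case: eqP => // ij; rewrite ij in nZi.
  rewrite (bigD1 j) //= mxE !eqxx big1 ?addr0 // => i /negbTE.
  by rewrite mxE eq_sym => ->.
Qed.

Lemma simplex_uniq : uniq simplex.
Proof.
rewrite /simplex /= map_inj_uniq ?enum_uniq ?andbT; last exact: e_inj.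
by apply/mapP => -[j _ /esym/eqP]; apply/negP; apply: e_neq0.
Qed.

Lemma simplex_size : size simplex = d.+1.
Proof. by rewrite /= size_map size_enum_ord. Qed.

End LowerBound.

Theorem theorem4p8 (K : fieldType) (G : zmodType) (le : rel G)
    (hG : ordered_group le) (nu : K -> option G) (hnu : is_valuation le nu)
    (d : nat) (hd : (1 <= d)%N) :
  VC_dim_eq (Conv le nu d) d.+1 /\
  (exists Y : seq 'rV[K]_d, uniq Y /\ size Y = d.+1 /\ shatters (Conv le nu d) Y) /\
  (forall Y : seq 'rV[K]_d, uniq Y -> size Y = d.+2 -> ~ shatters (Conv le nu d) Y).
Proof.
have lower : exists Y : seq 'rV[K]_d,
    uniq Y /\ size Y = d.+1 /\ shatters (Conv le nu d) Y.
  exists (simplex K d); split; [exact: simplex_uniq | split].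
  - exact: simplex_size.
  - exact: simplex_shattered.
split; [split|split] => //.
- move=> Y uY shY; rewrite leqNgt; apply/negP => big.
  exact: (convex_no_shatter hG hnu uY big shY).
- by move=> Y uY sY; apply: (convex_no_shatter hG hnu uY); rewrite sY.
Qed.
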